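(* Assume ideal Weyl gates. Let $\mathcal{M}$ be a noisy $n$-qudit instrument with generalized Pauli fidelities $\tilde\nu_{s,t}$. Let $\vec k=(k_1,\dots,k_m)$ be the output of the instrument benchmarking routine with sequence length $m$ and initial state $\rho$. Let $c_1,\dots,c_m\in\mathbb{Z}_d^n$ and set $c_{m+1}=0$. Then the expectation value of $$\prod_{j=1}^m\chi_{k_j}(c_j-c_{j+1})^*$$ equals $$\kappa(\vec c)=\operatorname{tr}\big(Z^{-c_1}\rho\big)\prod_{j=1}^m\tilde\nu_{c_j,c_{j+1}}.$$
   Context: Let $d,n$ be positive integers, with arithmetic on $\mathbb{Z}_d^n$ modulo $d$. Let $\chi_z(j)=e^{2\pi i z\cdot j/d}$, $X^x=\sum_j|j+x\rangle\langle j|$, and $Z^z=\sum_j\chi_z(j)|j\rangle\langle j|$ (so $Z^{-c}$ denotes $Z^{(-c)}$). For an operator $A$, $\mathcal{A}(\rho)=A\rho A^\dagger$. An instrument $\{\mathcal{M}_o\}_{o\in\mathbb{Z}_d^n}$ is a family of completely positive trace-non-increasing maps summing to a trace-preserving map. Its generalized Pauli fidelities are $$\tilde\nu_{s,t}=d^{-n}\sum_k\chi_k(s-t)^*\operatorname{tr}\big((Z^t)^\dagger\mathcal{M}_k(Z^s)\big).$$ The instrument benchmarking routine with sequence length $m$ proceeds as follows: - Prepare $\rho$ and set $\alpha_0=0$. - For $i=1,\dots,m$: choose $\alpha_i,\beta_i\in\mathbb{Z}_d^n$ uniformly at random; apply the ideal gate $Z^{\beta_i}X^{\alpha_{i-1}-\alpha_i}$;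 measure with the noisy instrument (outcome $o$ occurs with probability $\operatorname{tr}\mathcal{M}_o(\sigma)$ and leaves the state $\mathcal{M}_o(\sigma)/\operatorname{tr}\mathcal{M}_o(\sigma)$), obtaining $o_i$; record $k_i=\alpha_i+o_i$. - Return $\vec k=(k_1,\dots,k_m)$. *)

From mathcomp Require Import all_boot all_algebra.
From mathcomp Require Import reals trigo.
From mathcomp.real_closed Require Export complex.
Set Implicit Arguments. Unset Strict Implicit. Unset Printing Implicit Defensive.
Import GRing.Theory Num.Theory.
Local Open Scope ring_scope.

Section Weyl.
Context (R : realType) (d n : nat).

Notation C := R[i].

(* Z_d^n ; for d > 0, 'I_(d.-1.+1) is 'I_d with arithmetic mod d *)
Definition Zdn := {ffun 'I_n -> 'I_(d.-1.+1)}.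

Definition omega : C := (cos (2 * pi / d%:R) +i* sin (2 * pi / d%:R))%C.

(* z . j  (as a natural number; only its class mod d matters) *)
Definition dotn (z j : Zdn) : nat := (\sum_(i < n) (z i : nat) * (j i : nat))%N.

Definition chi (z j : Zdn) : C := omega ^+ dotn z j.

(* operators on C^{Z_d^n} as matrices indexed by Z_d^n *)
Definition Op := Zdn -> Zdn -> C.
Definition opmul (A B : Op) : Op := fun x y => \sum_z A x z * B z y.
Definition adj (A : Op) : Op := fun x y => (A y x)^*.
Definition tr (A : Op) : C := \sum_x A x x.
Definition conjop (A : Op) (rho : Op) : Op := opmul (opmul A rho) (adj A).

Definition Xop (x : Zdn) : Op := fun a b => (a == b + x)%:R.
Definition Zop (z : Zdn) : Op := fun a b => (a == b)%:R * chi z a.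

Definition psd (I : finType) (A : I -> I -> C) : Prop :=
  forall v : I -> C, 0 <= \sum_a \sum_b (v a)^* * A a b * v b.

Definition density (rho : Op) : Prop := psd rho /\ tr rho = 1.

Definition linear_map (Phi : Op -> Op) : Prop :=
  forall (c : C) (X Y : Op),
    Phi (fun x y => c * X x y + Y x y) = (fun x y => c * Phi X x y + Phi Y x y).

(* id_k (x) Phi acting on operators on C^k (x) C^{Z_d^n} *)
Definition ampl (k : nat) (Phi : Op -> Op)
    (X : 'I_k * Zdn -> 'I_k * Zdn -> C) : 'I_k * Zdn -> 'I_k * Zdn -> C :=
  fun p q => Phi (fun a b => X (p.1, a) (q.1, b)) p.2 q.2.

Definition completely_positive (Phi : Op -> Op) : Prop :=
  linear_map Phi /\
  forall (k : nat) (X : 'I_k * Zdn -> 'I_k * Zdn -> C), psd X -> psd (@ampl k Phi X).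

Definition instrument (M : Zdn -> Op -> Op) : Prop :=
  [/\ forall o, completely_positive (M o),
      forall o rho, psd rho -> tr (M o rho) <= tr rho &
      forall rho, \sum_o tr (M o rho) = tr rho].

Definition nu (M : Zdn -> Op -> Op) (s t : Zdn) : C :=
  (#|Zdn|%:R)^-1 *
  \sum_k (chi k (s - t))^* * tr (opmul (adj (Zop t)) (M k (Zop s))).

(* probability of a sequence of outcomes, computed sequentially: each step
   (x, b, o) applies the ideal gate Z^b X^x, then outcome o occurs with
   probability tr M_o(sigma) and the state is updated to M_o(sigma)/tr M_o(sigma). *)
Fixpoint run (M : Zdn -> Op -> Op) (sigma : Op) (l : seq (Zdn * Zdn * Zdn)) : C :=
  match l with
  | [::] => 1
  | (x, b, o) :: l' =>
      let tau := conjop (opmul (Zop b) (Xop x)) sigma in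
      let p := tr (M o tau) in
      p * run M (fun u v => p^-1 * M o tau u v) l'
  end.

Section Seq.
Context (m : nat).
(* 0-based access: at f j = f_{j+1} for j < m, and 0 otherwise *)
Definition at_ (f : {ffun 'I_m -> Zdn}) (j : nat) : Zdn :=
  match (insub j : option 'I_m) with Some i => f i | None => 0 end.

(* alpha_{i} (0-based: step i uses alpha_{i-1}, with alpha_0 = 0) *)
Definition prev_alpha (a : {ffun 'I_m -> Zdn}) (i : nat) : Zdn :=
  if i is i'.+1 then at_ a i' else 0.

Definition steps (a b o : {ffun 'I_m -> Zdn}) : seq (Zdn * Zdn * Zdn) :=
  [seq (prev_alpha a i - at_ a i, at_ b i, at_ o i) | i <- iota 0 m].

(* expectation of prod_j chi_{k_j}(c_j - c_{j+1})^*, k_j = alpha_j + o_j,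
   over uniform alpha, beta and the outcome distribution *)
Definition bench_expectation (M : Zdn -> Op -> Op) (rho : Op)
    (c : {ffun 'I_m -> Zdn}) : C :=
  \sum_(a : {ffun 'I_m -> Zdn}) \sum_(b : {ffun 'I_m -> Zdn})
  \sum_(o : {ffun 'I_m -> Zdn})
    ((#|Zdn|%:R ^+ (2 * m))^-1 * run M rho (steps a b o) *
     \prod_(j < m) (chi (at_ a j + at_ o j) (at_ c j - at_ c j.+1))^*).

Definition kappa (M : Zdn -> Op -> Op) (rho : Op) (c : {ffun 'I_m -> Zdn}) : C :=
  tr (opmul (Zop (- at_ c 0)) rho) * \prod_(j < m) nu M (at_ c j) (at_ c j.+1).
End Seq.
End Weyl.

From mathcomp Require Import all_boot all_order all_algebra.
From mathcomp Require Import reals trigo lra.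
From mathcomp Require Import boolp ring.
Import Order.TTheory GRing.Theory Num.Theory.
Set Implicit Arguments. Unset Strict Implicit. Unset Printing Implicit Defensive.
Local Open Scope ring_scope.

(* Outcome probabilities are traces of unnormalized states: each M_o is completely
   positive, so a zero-probability branch leaves the zero operator and the
   renormalizations in [run] cancel.  The expectation is then a sum over
   (alpha, beta, o) of tr (M_o_m ... M_o_1 rho) times characters, which factorizes
   round by round.  In one round, averaging over beta is a Z-twirl that makes the
   state diagonal, and the substitution alpha_i = u + alpha_(i-1) - j splits the
   character chi_(k_i)(c_i - c_(i+1))^* into the phase tr (Z^(-c_i) .) of the
   incoming state and the fidelity nu_(c_i, c_(i+1)) of the outgoing one. *)

Section RootOfUnity.
Variables (R : realType) (d : nat).
Hypothesis d_gt0 : (0 < d)%N.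
Local Notation w := (omega R d).
Local Notation theta := (2 * pi / d%:R : R).

Lemma omegaX k : w ^+ k = (cos (k%:R * theta) +i* sin (k%:R * theta))%C.
Proof.
elim: k => [|k IH]; first by rewrite expr0 mul0r cos0 sin0.
rewrite exprS IH /omega; simpc.
have -> : k.+1%:R * theta = theta + k%:R * theta by rewrite mulrS mulrDl mul1r.
by rewrite cosD sinD [X in (_ +i* X)%C = _]addrC.
Qed.

Lemma omega_expd : w ^+ d = 1.
Proof.
rewrite omegaX mulrC divfK; last by rewrite pnatr_eq0 -lt0n.
by rewrite mulr_natl cos2pi sin2pi.
Qed.

Lemma omega_neq0 : w != 0.
Proof. by apply: contra_eq_neq omega_expd => ->; rewrite expr0n eqn0Ngt d_gt0 eq_sym oner_eq0. Qed.

Lemma omegaX_neq1 k : (0 < k < d)%N -> w ^+ k != 1.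
Proof.
move=> /andP[k_gt0 k_ltd]; rewrite omegaX; apply/negP => /eqP [hcos hsin].
set t := k%:R * theta in hcos hsin.
have t_gt0 : 0 < t.
  by rewrite mulr_gt0 ?ltr0n // divr_gt0 ?ltr0n // mulr_gt0 ?ltr0n ?pi_gt0.
have t_lt2pi : t < pi *+ 2.
  rewrite /t mulrA ltr_pdivrMr ?ltr0n // [X in _ < X]mulrC.
  by rewrite -[pi *+ 2]mulr_natl ltr_pM2r ?mulr_gt0 ?pi_gt0 ?ltr0n // ltr_nat.
case: (ltrgtP t pi) => tpi.
- by move: (sin_gt0_pi (x := t)); rewrite t_gt0 tpi hsin ltxx => /(_ isT).
- have := sin_gt0_pi (x := t - pi).
  rewrite subr_gt0 tpi ltrBlDr -mulr2n t_lt2pi => /(_ isT).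
  by rewrite sinB sinpi cospi mulr0 subr0 mulrN1 hsin oppr0 ltxx.
- by move: hcos; rewrite tpi cospi; lra.
Qed.

Lemma conj_omega : w^* = w^-1.
Proof.
apply: (mulIf omega_neq0); rewrite mulVf ?omega_neq0 // /omega; simpc.
by rewrite -!expr2 cos2Dsin2 mulrC subrr.
Qed.

End RootOfUnity.

Section Characters.
Variables (R : realType) (d n : nat).
Hypothesis d_gt0 : (0 < d)%N.
Local Notation Z := (Zdn d n).
Local Notation chi := (@chi R d n).

Lemma chiE (z j : Z) : chi z j = \prod_(i < n) omega R d ^+ (z i * j i).
Proof. by rewrite /chi /dotn expr_sum. Qed.

Lemma chiDl (a b j : Z) : chi (a + b) j = chi a j * chi b j.
Proof.
have w_period : omega R d ^+ d.-1.+1 = 1 by rewrite prednK // omega_expd.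
rewrite !chiE -big_split; apply: eq_bigr => i _ /=.
by rewrite ffunE /= exprM (expr_mod _ w_period) -exprM mulnDl exprD.
Qed.

Lemma chiC (a b : Z) : chi a b = chi b a.
Proof. by rewrite !chiE; apply: eq_bigr => i _; rewrite mulnC. Qed.

Lemma chiDr (j a b : Z) : chi j (a + b) = chi j a * chi j b.
Proof. by rewrite chiC chiDl !(chiC j). Qed.

Lemma chi0l (j : Z) : chi 0 j = 1.
Proof. by rewrite chiE big1 // => i _; rewrite ffunE mul0n expr0. Qed.

Lemma chi0r (j : Z) : chi j 0 = 1.
Proof. by rewrite chiC chi0l. Qed.

Lemma chi_neq0 (a j : Z) : chi a j != 0.
Proof. exact/expf_neq0/omega_neq0. Qed.

Lemma chiNl (a j : Z) : chi (- a) j = (chi a j)^-1.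
Proof. by apply: (mulIf (chi_neq0 a j)); rewrite -chiDl addNr chi0l mulVf ?chi_neq0. Qed.

Lemma chiNr (a j : Z) : chi j (- a) = (chi j a)^-1.
Proof. by rewrite chiC chiNl chiC. Qed.

Lemma conj_chi (a j : Z) : (chi a j)^* = (chi a j)^-1.
Proof. by rewrite rmorphXn /= conj_omega // exprVn. Qed.

Lemma chi_separates (v : Z) : v != 0 -> exists e : Z, chi e v != 1.
Proof.
move=> v_neq0; have [i vi_neq0] : exists i, v i != 0.
  apply/existsP; apply: contraR v_neq0 => /existsPn v0.
  by apply/eqP/ffunP => i; rewrite ffunE; apply/eqP/negPn.
have vi_gt0 : (0 < v i)%N by rewrite lt0n.
have vi_ltd : (v i < d)%N by rewrite -[X in (_ < X)%N](prednK d_gt0).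
have one_lt : (1 < d.-1.+1)%N by rewrite prednK // (leq_ltn_trans vi_gt0).
exists [ffun j => if j == i then inord 1 else 0]; rewrite chiE (bigD1 i) //=.
rewrite big1 => [|j /negbTE ji]; last by rewrite ffunE ji mul0n expr0.
by rewrite mulr1 ffunE eqxx inordK // mul1n omegaX_neq1 ?vi_gt0.
Qed.

Lemma sum_chi (v : Z) : \sum_(b : Z) chi b v = (v == 0)%:R * #|Z|%:R.
Proof.
have [->|v_neq0] := eqVneq v 0.
  by under eq_bigr do rewrite chi0r; rewrite sumr_const mul1r.
have [e chi_e] := chi_separates v_neq0.
rewrite mul0r; set S := \sum_b _.
have S_invariant : S = S * chi e v.
  rewrite {1}/S (reindex_inj (addIr e)) /=.
  by under eq_bigr do rewrite chiDl; rewrite -mulr_suml.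
apply/eqP; have : S * (1 - chi e v) == 0 by rewrite mulrBr mulr1 -S_invariant subrr.
by rewrite mulf_eq0 subr_eq0 [1 == _]eq_sym (negbTE chi_e) orbF.
Qed.

Lemma card_Zdn_neq0 : #|Z|%:R != 0 :> R[i].
Proof. by rewrite pnatr_eq0 -lt0n; apply/card_gt0P; exists 0. Qed.

End Characters.

Lemma sum_deltal (S : pzSemiRingType) (I : finType) (a : I) (F : I -> S) :
  \sum_i (a == i)%:R * F i = F a.
Proof.
rewrite (bigD1 a) //= eqxx mul1r big1 ?addr0 // => i ia.
by rewrite eq_sym (negbTE ia) mul0r.
Qed.

Lemma sum_deltar (S : pzSemiRingType) (I : finType) (a : I) (F : I -> S) :
  \sum_i F i * (a == i)%:R = F a.
Proof.
rewrite (bigD1 a) //= eqxx mulr1 big1 ?addr0 // => i ia.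
by rewrite eq_sym (negbTE ia) mulr0.
Qed.

Section Operators.
Variables (R : realType) (d n : nat).
Local Notation Z := (Zdn d n).
Local Notation Op := (Op R d n).
Local Notation chi := (@chi R d n).
Local Notation N := (#|Z|%:R : R[i]).
Hypothesis d_gt0 : (0 < d)%N.

Lemma op_ext (A B : Op) : (forall u v, A u v = B u v) -> A = B.
Proof. by move=> AB; apply/funext => u; apply/funext => v. Qed.

Definition basis_proj (j : Z) : Op := fun u v => (j == u)%:R * (j == v)%:R.

Lemma diag_expansion (f : Z -> R[i]) :
  (fun u v => (u == v)%:R * f u) = (fun u v => \sum_j f j * basis_proj j u v).
Proof.
apply: op_ext => u v.
rewrite (eq_bigr (fun j => (u == j)%:R * (f j * (j == v)%:R))) => [|j _].
  by rewrite sum_deltal mulrC.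
by rewrite /basis_proj [u == j]eq_sym mulrCA.
Qed.

Lemma Zop_diag (c : Z) : Zop R c = (fun u v => \sum_j chi c j * basis_proj j u v).
Proof. exact: diag_expansion. Qed.

Lemma tr_Zop_mul (c : Z) (s : Op) :
  tr (opmul (Zop R c) s) = \sum_u chi c u * s u u.
Proof.
apply: eq_bigr => u _; rewrite /opmul /Zop.
under eq_bigr do rewrite -mulrA.
exact: (@sum_deltal _ _ u (fun z => chi c u * s z u)).
Qed.

Lemma adj_Zop (c : Z) : adj (Zop R c) = Zop R (- c).
Proof.
apply: op_ext => u v; rewrite /adj /Zop rmorphM /= conjC_nat.
by case: eqVneq => [->|_]; rewrite ?mul0r // conj_chi // chiNl.
Qed.

Lemma ZX_entry (b y u v : Z) :
  opmul (Zop R b) (Xop R y) u v = chi b u * (u - y == v)%:R.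
Proof.
rewrite /opmul /Zop /Xop.
under eq_bigr do rewrite [_ * chi b u]mulrC -mulrA.
by rewrite -mulr_sumr sum_deltal subr_eq.
Qed.

Lemma conjop_ZX_entry (b y : Z) (s : Op) u v :
  conjop (opmul (Zop R b) (Xop R y)) s u v =
  chi b u * (chi b v)^-1 * s (u - y) (v - y).
Proof.
have left_mul z : opmul (opmul (Zop R b) (Xop R y)) s u z = chi b u * s (u - y) z.
  rewrite {1}/opmul; under eq_bigr do rewrite ZX_entry -mulrA [_%:R * _]mulrC mulrA.
  exact: (@sum_deltar _ _ (u - y) (fun w => chi b u * s w z)).
rewrite /conjop {1}/opmul /adj.
under eq_bigr do rewrite left_mul ZX_entry rmorphM /= conjC_nat conj_chi // mulrA.
by rewrite (@sum_deltar _ _ (v - y) (fun z => chi b u * s (u - y) z / chi b v)) mulrAC.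
Qed.

(* Averaging over the phase gates dephases: by [sum_chi] only the diagonal of the
   shifted state survives. *)
Lemma sum_conjop_ZX (y : Z) (s : Op) u v :
  \sum_(b : Z) conjop (opmul (Zop R b) (Xop R y)) s u v =
  (u == v)%:R * (N * s (u - y) (u - y)).
Proof.
under eq_bigr do rewrite conjop_ZX_entry -chiNr // -chiDr //.
rewrite -mulr_suml sum_chi // subr_eq0.
by case: eqVneq => [->|_]; rewrite ?mul0r // !mul1r.
Qed.

End Operators.

Section LinearMaps.
Variables (R : realType) (d n : nat).
Local Notation Op := (Op R d n).
Local Notation zero := (fun _ _ => 0 : R[i]).

Variable Phi : Op -> Op.
Hypothesis Phi_linear : linear_map Phi.

Lemma linear_map0 : Phi zero = zero.
Proof.
have := Phi_linear 1 zero zero.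
have -> : (fun x y => 1 * zero x y + zero x y) = zero :> Op.
  by apply: op_ext => x y; rewrite mulr0 addr0.
move=> Phi0; apply: op_ext => x y; move/(congr1 (fun f => f x y))/eqP: Phi0.
by rewrite mul1r -subr_eq0 opprD addrA subrr sub0r oppr_eq0 => /eqP.
Qed.

Lemma linear_mapZ (k : R[i]) (X : Op) :
  Phi (fun u v => k * X u v) = (fun u v => k * Phi X u v).
Proof.
have := Phi_linear k X zero; rewrite linear_map0.
have -> : (fun x y => k * X x y + zero x y) = (fun x y => k * X x y) :> Op.
  by apply: op_ext => x y; rewrite addr0.
by move=> ->; apply: op_ext => x y; rewrite addr0.
Qed.

Lemma linear_map_sum (I : Type) (s : seq I) (k : I -> R[i]) (F : I -> Op) :
  Phi (fun u v => \sum_(i <- s) k i * F i u v) =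
  (fun u v => \sum_(i <- s) k i * Phi (F i) u v).
Proof.
elim: s => [|a s IH].
  have -> : (fun u v => \sum_(i <- [::]) k i * F i u v) = zero :> Op.
    by apply: op_ext => u v; rewrite big_nil.
  by rewrite linear_map0; apply: op_ext => u v; rewrite big_nil.
have -> : (fun u v => \sum_(i <- a :: s) k i * F i u v) =
    (fun u v => k a * F a u v + (fun u v => \sum_(i <- s) k i * F i u v) u v).
  by apply: op_ext => u v; rewrite big_cons.
by rewrite Phi_linear IH; apply: op_ext => u v; rewrite big_cons.
Qed.

End LinearMaps.

Section OperatorLinearity.
Variables (R : realType) (d n : nat).
Local Notation Op := (Op R d n).

Lemma linear_map_comp (Phi Psi : Op -> Op) :
  linear_map Phi -> linear_map Psi -> linear_map (Phi \o Psi).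
Proof. by move=> linPhi linPsi c X Y /=; rewrite linPsi linPhi. Qed.

Lemma opmul_linearr (A : Op) : linear_map (opmul A).
Proof.
move=> c X Y; apply: op_ext => x y; rewrite /opmul mulr_sumr -big_split.
by apply: eq_bigr => z _ /=; ring.
Qed.

Lemma opmul_linearl (B : Op) : linear_map (fun X : Op => opmul X B).
Proof.
move=> c X Y; apply: op_ext => x y; rewrite /opmul mulr_sumr -big_split.
by apply: eq_bigr => z _ /=; ring.
Qed.

Lemma conjop_linear (G : Op) : linear_map (conjop G).
Proof. exact: linear_map_comp (opmul_linearl _) (opmul_linearr _). Qed.

Lemma tr_sum (I : Type) (s : seq I) (k : I -> R[i]) (F : I -> Op) :
  tr (fun u v => \sum_(i <- s) k i * F i u v) = \sum_(i <- s) k i * tr (F i).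
Proof. by rewrite /tr exchange_big; apply: eq_bigr => i _; rewrite mulr_sumr. Qed.

Lemma trZ (k : R[i]) (X : Op) : tr (fun u v => k * X u v) = k * tr X.
Proof. by rewrite /tr mulr_sumr. Qed.

End OperatorLinearity.

Section PositiveMatrices.
Variables (R : realType) (I : finType).
Implicit Types (A : I -> I -> R[i]) (a b : I).

Lemma psd_diag A a : psd A -> 0 <= A a a.
Proof.
move=> /(_ (fun x => (a == x)%:R)).
under eq_bigr do rewrite conjC_nat (@sum_deltar _ _ a (fun y => _ * A _ y)).
by rewrite (@sum_deltal _ _ a (fun x => A x a)).
Qed.

Lemma psd_trace_ge0 A : psd A -> 0 <= \sum_x A x x.
Proof. by move=> psdA; apply: sumr_ge0 => x _; apply: psd_diag. Qed.

Lemma quad_form_pair A a b (t : R[i]) :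
  \sum_x \sum_y ((a == x)%:R + t * (b == x)%:R)^* * A x y *
                ((a == y)%:R + t * (b == y)%:R)
  = A a a + t * A a b + t^* * (A b a + t * A b b).
Proof.
have inner x : \sum_y A x y * ((a == y)%:R + t * (b == y)%:R) = A x a + t * A x b.
  under eq_bigr do rewrite mulrDr mulrCA.
  by rewrite big_split /= sum_deltar -mulr_sumr sum_deltar.
transitivity (\sum_x ((a == x)%:R + t * (b == x)%:R)^* * (A x a + t * A x b)).
  by apply: eq_bigr => x _; rewrite -inner mulr_sumr; apply: eq_bigr => y _; rewrite mulrA.
under eq_bigr do rewrite rmorphD rmorphM /= !conjC_nat mulrDl -mulrA.
by rewrite big_split /= sum_deltal -mulr_sumr sum_deltal.
Qed.

(* Evaluate the form on e_a + t e_b for t = 1, -1, 'i, -'i. *)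
Lemma psd_diag0_offdiag A a b : psd A -> A a a = 0 -> A b b = 0 -> A a b = 0.
Proof.
move=> psdA Aaa0 Abb0.
have form t : 0 <= t * A a b + t^* * A b a.
  have := psdA (fun x => (a == x)%:R + t * (b == x)%:R).
  by rewrite quad_form_pair Aaa0 Abb0 mulr0 !addr0 add0r.
have sym : A a b + A b a = 0.
  have := form (-1); rewrite rmorphN1 !mulN1r -opprD oppr_ge0 => ge.
  by apply/le_anti; rewrite ge; have := form 1; rewrite rmorph1 !mul1r.
have conj_i := @conjCi R[i].
have antisym : 'i * A a b - 'i * A b a = 0.
  have := form (- 'i); rewrite -conj_i conjCK conj_i mulNr addrC => le.
  apply/le_anti; rewrite -oppr_ge0 opprB le.
  by have := form 'i; rewrite conj_i mulNr.
move: antisym; rewrite -mulrBr => /eqP; rewrite mulf_eq0 (negbTE (@neq0Ci _)) /= subr_eq0.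
by move/eqP=> Aab_sym; move/eqP: sym; rewrite -Aab_sym -mulr2n mulrn_eq0 => /eqP.
Qed.

Lemma psd_trace0 A : psd A -> \sum_x A x x = 0 -> forall a b, A a b = 0.
Proof.
move=> psdA tr0; have diag0 a : A a a = 0.
  by apply: (psumr_eq0P (P := predT) (F := fun x => A x x)) => // x _; apply: psd_diag.
by move=> a b; apply: psd_diag0_offdiag.
Qed.

Lemma psdZ A (k : R[i]) : 0 <= k -> psd A -> psd (fun u v => k * A u v).
Proof.
move=> k_ge0 psdA v.
rewrite (eq_bigr (fun a => k * \sum_b (v a)^* * A a b * v b)) => [|a _].
  by rewrite -mulr_sumr mulr_ge0.
by rewrite mulr_sumr; apply: eq_bigr => b _; ring.
Qed.

Lemma psd_ord1 (X : 'I_1 * I -> 'I_1 * I -> R[i]) :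
  psd X <-> psd (fun a b => X (ord0, a) (ord0, b)).
Proof.
have sum_ord1 (F : 'I_1 * I -> R[i]) : \sum_p F p = \sum_a F (ord0, a).
  by apply: (reindex (pair ord0)); exists snd => [a _|[i a] _] //=; rewrite (ord1 i).
have form V : \sum_p \sum_q (V p)^* * X p q * V q =
    \sum_a \sum_b (V (ord0, a))^* * X (ord0, a) (ord0, b) * V (ord0, b).
  by rewrite sum_ord1; apply: eq_bigr => a _; rewrite sum_ord1.
split=> [psdX v | psdX V]; last by rewrite form.
by have := psdX (fun p => v p.2); rewrite form.
Qed.

End PositiveMatrices.

Section PositiveOperators.
Variables (R : realType) (d n : nat).
Local Notation Z := (Zdn d n).
Local Notation Op := (Op R d n).

Lemma psd_conjop (G A : Op) : psd A -> psd (conjop G A).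
Proof.
move=> psdA v; pose w z := \sum_b (G b z)^* * v b.
have := psdA w; congr (0 <= _).
transitivity (\sum_x \sum_z \sum_a \sum_b (v a)^* * G a x * A x z * (G b z)^* * v b).
  apply: eq_bigr => x _; apply: eq_bigr => z _.
  rewrite /w rmorph_sum !mulr_suml; apply: eq_bigr => a _.
  by rewrite mulr_sumr; apply: eq_bigr => b _; rewrite rmorphM /= conjCK; ring.
under eq_bigr do rewrite exchange_big.
under eq_bigr do under eq_bigr do rewrite exchange_big.
rewrite exchange_big; under eq_bigr do rewrite exchange_big.
under eq_bigr do under eq_bigr do rewrite exchange_big.
apply: eq_bigr => a _; apply: eq_bigr => b _.
rewrite /conjop /opmul /adj mulr_sumr mulr_suml; apply: eq_bigr => z _.
rewrite !mulr_suml mulr_sumr mulr_suml; apply: eq_bigr => x _; ring.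
Qed.

Lemma cp_psd (Phi : Op -> Op) (A : Op) :
  completely_positive Phi -> psd A -> psd (Phi A).
Proof.
move=> [_ cpPhi] psdA.
have psdX : psd (fun p q : 'I_1 * Z => A p.2 q.2) by apply/psd_ord1.
by have /psd_ord1 := cpPhi 1%N _ psdX.
Qed.

End PositiveOperators.

Section Evolution.
Variables (R : realType) (d n : nat).
Local Notation Z := (Zdn d n).
Local Notation Op := (Op R d n).
Variable M : Z -> Op -> Op.

Fixpoint evolve (l : seq (Z * Z * Z)) (s : Op) : Op :=
  if l is (x, b, o) :: l' then evolve l' (M o (conjop (opmul (Zop R b) (Xop R x)) s))
  else s.

Hypothesis M_cp : forall o, completely_positive (M o).

Lemma evolve_linear l : linear_map (evolve l).
Proof.
elim: l => [|[[x b] o] l IH] //=.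
exact: linear_map_comp IH (linear_map_comp (proj1 (M_cp o)) (conjop_linear _)).
Qed.

Lemma run_evolve l (s : Op) : psd s -> tr s = 1 -> run M s l = tr (evolve l s).
Proof.
elim: l s => [|[[x b] o] l IH] s psd_s tr_s /=; first by rewrite tr_s.
set tau := conjop _ s.
have psd_Mtau : psd (M o tau) by apply: cp_psd (M_cp o) (psd_conjop _ psd_s).
(* A zero-probability outcome makes [run] divide by 0, but it is then multiplied by
   that 0, and the unnormalized state is a trace-zero psd operator, hence 0. *)
have [p0|p_neq0] := eqVneq (tr (M o tau)) 0.
  rewrite p0 mul0r; have -> : M o tau = (fun _ _ => 0) by apply: op_ext; exact: psd_trace0.
  by rewrite (linear_map0 (evolve_linear l)) /tr big1_eq.
set p := tr (M o tau).
have psd_normalized : psd (fun u v => p^-1 * M o tau u v).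
  by apply: psdZ => //; rewrite invr_ge0 psd_trace_ge0.
have tr_normalized : tr (fun u v => p^-1 * M o tau u v) = 1 by rewrite trZ mulVf.
rewrite (IH _ psd_normalized tr_normalized) (linear_mapZ (evolve_linear l)).
by rewrite trZ mulVKf.
Qed.

End Evolution.

Section Twirl.
Variables (R : realType) (d n : nat).
Hypothesis d_gt0 : (0 < d)%N.
Local Notation Z := (Zdn d n).
Local Notation Op := (Op R d n).
Local Notation chi := (@chi R d n).
Local Notation N := (#|Z|%:R : R[i]).
Variable M : Z -> Op -> Op.
Hypothesis M_linear : forall o, linear_map (M o).

Definition proj_response (c : Z) (o j : Z) : R[i] :=
  tr (opmul (Zop R (- c)) (M o (basis_proj R j))).

Lemma tr_measured_sum (c o : Z) (I : Type) (s : seq I) (k : I -> R[i]) (F : I -> Op) :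
  tr (opmul (Zop R (- c)) (M o (fun u v => \sum_(i <- s) k i * F i u v))) =
  \sum_(i <- s) k i * tr (opmul (Zop R (- c)) (M o (F i))).
Proof. by rewrite (linear_map_sum (M_linear o)) (linear_map_sum (opmul_linearr _)) tr_sum. Qed.

Lemma nu_expansion (c c' : Z) : nu M c c' =
  N^-1 * \sum_(k : Z) (chi k (c - c'))^* * \sum_(j : Z) chi c j * proj_response c' k j.
Proof.
rewrite /nu adj_Zop //; congr (_ * _); apply: eq_bigr => k _.
by rewrite [Zop R c]Zop_diag tr_measured_sum.
Qed.

Lemma sum_twirled_response (c : Z) (o y : Z) (s : Op) :
  \sum_(b : Z) tr (opmul (Zop R (- c)) (M o (conjop (opmul (Zop R b) (Xop R y)) s))) =
  N * \sum_(j : Z) s (j - y) (j - y) * proj_response c o j.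
Proof.
have twirl : (fun u v => \sum_(b <- index_enum Z) 1 * conjop (opmul (Zop R b) (Xop R y)) s u v) =
    (fun u v => \sum_(j : Z) (N * s (j - y) (j - y)) * basis_proj R j u v).
  rewrite -(diag_expansion (fun j => N * s (j - y) (j - y))).
  by apply: op_ext => u v; under eq_bigr do rewrite mul1r; rewrite sum_conjop_ZX.
move/(congr1 (fun X => tr (opmul (Zop R (- c)) (M o X)))): twirl.
rewrite !tr_measured_sum; under eq_bigr do rewrite mul1r.
by move=> ->; rewrite mulr_sumr; apply: eq_bigr => j _; rewrite mulrA.
Qed.

(* After the average over b ([sum_twirled_response]), substituting a = u + (p - j)
   separates tr (Z^(-c) s) from nu c c'. *)
Lemma round_average (s : Op) (p c c' : Z) :
  \sum_(a : Z) \sum_(b : Z) \sum_(o : Z) (N ^+ 2)^-1 * (chi (a + o) (c - c'))^* *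
     ((chi a c')^* * tr (opmul (Zop R (- c')) (M o (conjop (opmul (Zop R b) (Xop R (p - a))) s))))
  = (chi p c)^* * tr (opmul (Zop R (- c)) s) * nu M c c'.
Proof.
pose r := proj_response c'.
transitivity (N^-1 * \sum_(a : Z) \sum_(o : Z) \sum_(j : Z)
    (chi (a + o) (c - c'))^* * (chi a c')^* * s (j - (p - a)) (j - (p - a)) * r o j).
  rewrite mulr_sumr; apply: eq_bigr => a _; rewrite exchange_big mulr_sumr.
  apply: eq_bigr => o _; rewrite -!mulr_sumr sum_twirled_response expr2 invfM -!mulrA.
  congr (_ * _); rewrite mulrCA [_ * (N * _)]mulrCA mulKf ?card_Zdn_neq0 //.
  by rewrite !mulr_sumr; under eq_bigr do rewrite !mulrA.
rewrite exchange_big; under eq_bigr do rewrite exchange_big.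
rewrite tr_Zop_mul nu_expansion mulrCA; congr (_ * _).
rewrite mulr_sumr; apply: eq_bigr => o _; rewrite mulrA mulr_sumr; apply: eq_bigr => j _.
rewrite -!mulrA mulr_suml mulr_sumr (reindex_inj (addIr (p - j))).
apply: eq_bigr => u _ /=.
have -> : j - (p - (u + (p - j))) = u.
  by rewrite opprB addrCA -addrA [X in u + X]addrA subrK subrr addr0.
rewrite /r !conj_chi // !chiDl // !chiDr // !chiNl // !chiNr // !invrK [chi c u]chiC [chi c j]chiC.
by field; rewrite ?chi_neq0.
Qed.

End Twirl.

Section FfunCons.
Variables (T : Type) (m : nat).

Definition ffun_cons (x : T) (f : {ffun 'I_m -> T}) : {ffun 'I_m.+1 -> T} :=
  [ffun i => if unlift ord0 i is Some j then f j else x].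

Lemma ffun_consK (g : {ffun 'I_m.+1 -> T}) :
  ffun_cons (g ord0) [ffun j => g (lift ord0 j)] = g.
Proof. by apply/ffunP => i; rewrite ffunE; case: unliftP => [j ->|->] //; rewrite ffunE. Qed.

End FfunCons.

Section SumFfun.
Variables (S : nmodType) (T : finType) (m : nat).
Local Notation F m := {ffun 'I_m -> T}.

Lemma sum_ffun_cons (G : F m.+1 -> S) :
  \sum_g G g = \sum_(x : T) \sum_(f : F m) G (ffun_cons x f).
Proof.
rewrite pair_big /=; apply: (reindex (fun p : T * F m => ffun_cons p.1 p.2)).
exists (fun g : F m.+1 => (g ord0, [ffun j : 'I_m => g (lift ord0 j)])) => [[x f] _ | g _] /=.
  congr (_, _); first by rewrite ffunE unlift_none.
  by apply/ffunP => j; rewrite !ffunE liftK.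
exact: ffun_consK.
Qed.

Lemma sum3_ffun_cons (G : F m.+1 -> F m.+1 -> F m.+1 -> S) :
  \sum_a \sum_b \sum_o G a b o =
  \sum_(xa : T) \sum_(xb : T) \sum_(xo : T) \sum_(fa : F m) \sum_(fb : F m) \sum_(fo : F m)
     G (ffun_cons xa fa) (ffun_cons xb fb) (ffun_cons xo fo).
Proof.
rewrite sum_ffun_cons; apply: eq_bigr => xa _.
under eq_bigr do rewrite sum_ffun_cons; rewrite exchange_big; apply: eq_bigr => xb _.
under eq_bigr do under eq_bigr do rewrite sum_ffun_cons.
by under eq_bigr do rewrite exchange_big; rewrite exchange_big.
Qed.

End SumFfun.

Section Indexing.
Variables (d n : nat).
Local Notation Z := (Zdn d n).

Lemma at_ord m (f : {ffun 'I_m -> Z}) (i : 'I_m) : at_ f i = f i.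
Proof. by rewrite /at_ valK. Qed.

Lemma at_out m (f : {ffun 'I_m -> Z}) j : (m <= j)%N -> at_ f j = 0.
Proof. by move=> mj; rewrite /at_ insubF // ltnNge mj. Qed.

Lemma at_cons0 m x (f : {ffun 'I_m -> Z}) : at_ (ffun_cons x f) 0 = x.
Proof. by rewrite (at_ord _ ord0) ffunE unlift_none. Qed.

Lemma at_consS m x (f : {ffun 'I_m -> Z}) j : at_ (ffun_cons x f) j.+1 = at_ f j.
Proof.
have [jm|mj] := ltnP j m; last by rewrite !at_out.
by rewrite -[j.+1]/(val (lift ord0 (Ordinal jm))) at_ord ffunE liftK -at_ord.
Qed.

(* [p] plays the role of the previous alpha: [steps a b o] is [steps_from 0 a b o]
   by conversion. *)
Definition steps_from m (p : Z) (a b o : {ffun 'I_m -> Z}) : seq (Z * Z * Z) :=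
  [seq ((if i is i'.+1 then at_ a i' else p) - at_ a i, at_ b i, at_ o i) | i <- iota 0 m].

Lemma steps_from_cons m p xa xb xo (fa fb fo : {ffun 'I_m -> Z}) :
  steps_from p (ffun_cons xa fa) (ffun_cons xb fb) (ffun_cons xo fo) =
  (p - xa, xb, xo) :: steps_from xa fa fb fo.
Proof.
rewrite /steps_from /= !at_cons0; congr (_ :: _).
rewrite -[1%N]addn0 iotaDl -map_comp; apply: eq_map => -[|i] /=;
  by rewrite !at_consS ?at_cons0.
Qed.

End Indexing.

Section Benchmark.
Variables (R : realType) (d n : nat).
Hypothesis d_gt0 : (0 < d)%N.
Local Notation Z := (Zdn d n).
Local Notation Op := (Op R d n).
Local Notation chi := (@chi R d n).
Local Notation N := (#|Z|%:R : R[i]).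
Variable M : Z -> Op -> Op.
Hypothesis M_linear : forall o, linear_map (M o).

Lemma bench_sum_from m (s : Op) (p : Z) (c : {ffun 'I_m -> Z}) :
  \sum_(a : {ffun 'I_m -> Z}) \sum_(b : {ffun 'I_m -> Z}) \sum_(o : {ffun 'I_m -> Z})
    ((N ^+ (2 * m))^-1 * tr (evolve M (steps_from p a b o) s) *
     \prod_(j < m) (chi (at_ a j + at_ o j) (at_ c j - at_ c j.+1))^*)
  = (chi p (at_ c 0))^* * tr (opmul (Zop R (- at_ c 0)) s) *
    \prod_(j < m) nu M (at_ c j) (at_ c j.+1).
Proof.
elim: m s p c => [|m IH] s p c.
  under eq_bigr do under eq_bigr do under eq_bigr do
    rewrite big_ord0 muln0 expr0 invr1 mul1r mulr1 /steps_from /=.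
  rewrite !sumr_const card_ffun card_ord expn0 !mulr1n big_ord0 mulr1.
  rewrite at_out // chi0r // rmorph1 mul1r oppr0 tr_Zop_mul.
  by apply: eq_bigr => u _; rewrite chi0l // mul1r.
rewrite -(ffun_consK c); move: (c ord0) [ffun j => c (lift ord0 j)] => c0 {}c.
rewrite sum3_ffun_cons.
transitivity (\sum_(xa : Z) \sum_(xb : Z) \sum_(xo : Z)
  ((N ^+ 2)^-1 * (chi (xa + xo) (c0 - at_ c 0))^* * ((chi xa (at_ c 0))^* *
     tr (opmul (Zop R (- at_ c 0)) (M xo (conjop (opmul (Zop R xb) (Xop R (p - xa))) s)))) *
  \prod_(j < m) nu M (at_ c j) (at_ c j.+1))).
  apply: eq_bigr => xa _; apply: eq_bigr => xb _; apply: eq_bigr => xo _.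
  rewrite -mulrA -IH !mulr_sumr; apply: eq_bigr => fa _.
  rewrite !mulr_sumr; apply: eq_bigr => fb _; rewrite !mulr_sumr; apply: eq_bigr => fo _.
  rewrite steps_from_cons /= big_ord_recl /=.
  under eq_bigr do rewrite /bump /= !at_consS.
  by rewrite !at_cons0 !at_consS mulnS exprD invfM; ring.
under eq_bigr do under eq_bigr do rewrite -mulr_suml.
under eq_bigr do rewrite -mulr_suml.
rewrite -mulr_suml round_average // big_ord_recl /=.
under [in RHS]eq_bigr do rewrite /bump /= !at_consS.
by rewrite !at_cons0 !at_consS; ring.
Qed.

End Benchmark.

Theorem theorem4 (R : realType) (d n : nat) (hd : (0 < d)%N)
    (M : Zdn d n -> Op R d n -> Op R d n) (hM : instrument M)
    (rho : Op R d n) (hrho : density rho)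
    (m : nat) (c : {ffun 'I_m -> Zdn d n}) :
  bench_expectation M rho c = kappa M rho c.
Proof.
have [M_cp _ _] := hM; have [psd_rho tr_rho] := hrho.
have M_linear o : linear_map (M o) by case: (M_cp o).
have := bench_sum_from hd M_linear rho 0 c.
rewrite chi0l // rmorph1 mul1r /kappa => <-.
apply: eq_bigr => a _; apply: eq_bigr => b _; apply: eq_bigr => o _.
by rewrite (run_evolve M_cp _ psd_rho tr_rho).
Qed.
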